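(* Let $\mathcal{G}^*=(\mathbb{V}^*,\mathbb{E}^* )$ be a graph that is either an ADMG or a C-DMG, let $\mathbb{W}^*\subseteq\mathbb{V}^*$, and let $\tilde{\pi}=\langle V_1,\dots,V_n\rangle$ be a walk in $\mathcal{G}^*$. If $\tilde{\pi}$ is $\mathbb{W}^*$-active (not blocked by $\mathbb{W}^*$), then its primary path $\tilde{\pi}_p$ is $\mathbb{W}^*$-active.
   Context: An ADMG is a graph with directed edges $\rightarrow$ and bidirected edges $\leftrightarrow$ whose directed edges form no directed cycle; a C-DMG is a graph with directed and bidirected edges (directed cycles and self-loops allowed) obtained from an ADMG by taking a partition of its vertices into clusters as vertices, with a directed (resp. bidirected) edge between clusters iff some members are so connected. A walk is a sequence of vertices with a specified edge between each consecutive pair. The primary path $\tilde{\pi}_p=\langle U_1,\dots,U_m\rangle$ of a walk $\tilde{\pi}=\langle V_1,\dots,V_n\rangle$ is defined by $U_1=V_1$ and $U_{k+1}=V_{j+1}$ where $j=\max\{i: V_i=U_k\}$, until $U_{k+1}=V_n$; the edge between $U_k$ and $U_{k+1}$ in $\tilde{\pi}_p$ is the edge (with the same type and orientation) between $V_j$ and $V_{j+1}$ in $\tilde{\pi}$. $\mathrm{De}(V)$ denotes the descendants of $V$ in $\mathcal{G}^*$, including $V$. A walk $\langle V_1,\dots,V_n\rangle$ is blocked by $\mathbb{W}^*$ if (1) $V_1\in\mathbb{W}^*$ or $V_n\in\mathbb{W}^*$; or (2) for some $1<i<n$ the walk contains $V_{i-1}\,*\!-\!*\,V_i\rightarrow V_{i+1}$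 or $V_{i-1}\leftarrow V_i\,*\!-\!*\,V_{i+1}$ (any edge type for $*\!-\!*$) with $V_i\in\mathbb{W}^*$; or (3) for some $1<i<n$ it contains $V_{i-1}\,*\!\!\rightarrow V_i\leftarrow\!\!*\,V_{i+1}$ (each edge directed into $V_i$ or bidirected) with $\mathrm{De}(V_i)\cap\mathbb{W}^*=\emptyset$. A walk not blocked is active. *)

From mathcomp Require Import all_boot.
Set Implicit Arguments. Unset Strict Implicit. Unset Printing Implicit Defensive.

Record mgraph (V : Type) := MGraph { dir : rel V ; bi : rel V }.

Definition is_ADMG (V : finType) (G : mgraph V) : Prop :=
  (forall u v, bi G u v = bi G v u) /\
  (forall u, ~~ bi G u u) /\
  (forall u v, dir G u v -> ~~ connect (dir G) v u).

(* C-DMG: the cluster graph of some ADMG H on vertex type U with respect to a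
   partition of U into (nonempty) clusters, given by a surjection f : U -> V
   (cluster c = f^-1 c). *)
Definition is_CDMG (V : finType) (G : mgraph V) : Prop :=
  exists (U : finType) (H : mgraph U) (f : U -> V),
    is_ADMG H /\ (forall c, exists u, f u = c) /\
    (forall c1 c2,
       (dir G c1 c2 <-> exists u1 u2, [/\ f u1 = c1, f u2 = c2 & dir H u1 u2]) /\
       (bi G c1 c2 <-> exists u1 u2, [/\ f u1 = c1, f u2 = c2 & bi H u1 u2])).

(* Edge of a walk between V_i and V_{i+1}:
   EFwd : V_i -> V_{i+1},  EBwd : V_i <- V_{i+1},  EBi : V_i <-> V_{i+1}. *)
Inductive ekind := EFwd | EBwd | EBi.

(* A walk <V_1,...,V_n> is encoded by its first vertex x = V_1 and the list
   s = [(e_1,V_2); ...; (e_{n-1},V_n)], e_i being the edge between V_i, V_{i+1}. *)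
Definition wverts (V : Type) (x : V) (s : seq (ekind * V)) : seq V :=
  x :: map snd s.

Definition edge_ok (V : Type) (G : mgraph V) (a : V) (e : ekind) (b : V) : bool :=
  match e with
  | EFwd => dir G a b
  | EBwd => dir G b a
  | EBi => bi G a b
  end.

Fixpoint is_walk (V : Type) (G : mgraph V) (x : V) (s : seq (ekind * V)) : bool :=
  match s with
  | [::] => true
  | (e, y) :: s' => edge_ok G x e y && is_walk G y s'
  end.

(* 0-based index of the last occurrence of x in the vertex list x :: map snd s *)
Definition last_idx (V : eqType) (x : V) (s : seq (ekind * V)) : nat :=
  (size (wverts x s)).-1 - index x (rev (wverts x s)).

(* Primary path: from the current vertex U_k = V_j (j the last occurrence),
   step along the edge (V_j, V_{j+1}); stop when nothing remains (U_k = V_n). *)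
Fixpoint primary_aux (V : eqType) (fuel : nat) (x : V) (s : seq (ekind * V))
  : seq (ekind * V) :=
  match fuel with
  | 0 => [::]
  | fuel'.+1 =>
    match drop (last_idx x s) s with
    | [::] => [::]
    | (e, y) :: rest => (e, y) :: primary_aux fuel' y rest
    end
  end.

Definition primary (V : eqType) (x : V) (s : seq (ekind * V)) : seq (ekind * V) :=
  primary_aux (size s) x s.

Definition De (V : finType) (G : mgraph V) (v : V) : {set V} :=
  [set w | connect (dir G) v w].

Definition blocked (V : finType) (G : mgraph V) (W : {set V})
    (x : V) (s : seq (ekind * V)) : Prop :=
  let vs := wverts x s in
  let n := size vs in
  let es := map fst s in
  (x \in W) \/ (last x (map snd s) \in W) \/
  (exists i, [/\ 0 < i, i < n.-1 &
     let a := nth EBi es i.-1 in   (* edge between V_{i-1} and V_i *)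
     let b := nth EBi es i in      (* edge between V_i and V_{i+1} *)
     let v := nth x vs i in
     ((b = EFwd \/ a = EBwd) /\ v \in W) \/
     ((a = EFwd \/ a = EBi) /\ (b = EBwd \/ b = EBi) /\ De G v :&: W = set0)]).

Definition active (V : finType) (G : mgraph V) (W : {set V})
    (x : V) (s : seq (ekind * V)) : Prop := ~ blocked G W x s.

From mathcomp Require Import all_boot.
Set Implicit Arguments. Unset Strict Implicit. Unset Printing Implicit Defensive.

(* A walk is active iff its endpoints avoid W and every interior triple
   (incoming edge, vertex, outgoing edge) is open.  The primary path keeps the
   endpoints, and its triple at U_k glues the edge entering some visit of U_k
   to the edge leaving the last visit, the sub-walk in between being a closed
   walk at U_k all of whose triples are open.  If U_k is in W, both visits are
   colliders, so the glued triple is a collider with U_k itself as descendant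
   in W.  If the glued triple is a collider, walk back from the last visit: each
   step either meets a collider of the walk, which has a descendant in W, or
   follows an edge U <- U' back from a parent, which stays among the ancestors
   of U_k; the first visit is a collider at the latest.  So U_k has a
   descendant in W. *)

Section PrimaryPath.

Variable V : eqType.
Implicit Types (x : V) (s : seq (ekind * V)).

Lemma last_idx_le x s : last_idx x s <= size s.
Proof. by rewrite /last_idx /wverts /= size_map leq_subr. Qed.

Lemma last_take_last_idx x s : last x (map snd (take (last_idx x s) s)) = x.
Proof.
set vs := wverts x s.
have x_vs : x \in rev vs by rewrite mem_rev mem_head.
have idx_lt : index x (rev vs) < size vs by rewrite -size_rev index_mem.
have size_take_idx : size (take (last_idx x s) (map snd s)) = last_idx x s.
  by rewrite size_takel // size_map last_idx_le.
rewrite map_take (last_nth x) size_take_idx.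
rewrite -[x :: _]/(take (last_idx x s).+1 vs) nth_take //.
by rewrite /last_idx -/vs -predn_sub -subnS -nth_rev ?nth_index.
Qed.

Lemma drop_last_idx_cons x s e y rest :
  drop (last_idx x s) s = (e, y) :: rest ->
  s = take (last_idx x s) s ++ (e, y) :: rest /\ size rest < size s.
Proof.
move=> drop_s; split; first by rewrite -drop_s cat_take_drop.
have := congr1 size drop_s; rewrite size_drop /= => size_drop_s.
by rewrite -size_drop_s leq_subr.
Qed.

Lemma last_primary_aux fuel x s :
  size s <= fuel -> last x (map snd (primary_aux fuel x s)) = last x (map snd s).
Proof.
elim: fuel x s => [|fuel IH] x s; first by case: s.
move=> size_s /=; have last_take := last_take_last_idx x s.
case drop_s: (drop (last_idx x s) s) => [|[e y] rest].
  by rewrite -(cat_take_drop (last_idx x s) s) drop_s cats0 last_take.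
have [def_s size_rest] := drop_last_idx_cons drop_s.
rewrite /= IH; last by rewrite -ltnS (leq_trans size_rest).
by rewrite [in RHS]def_s map_cat last_cat last_take.
Qed.

End PrimaryPath.

Lemma is_walk_cat (V : Type) (G : mgraph V) x p q :
  is_walk G x (p ++ q) = is_walk G x p && is_walk G (last x (map snd p)) q.
Proof. by elim: p x => [|[e y] p IH] x //=; rewrite IH andbA. Qed.

Definition head_right (e : ekind) : bool := if e is EBwd then false else true.
Definition head_left (e : ekind) : bool := if e is EFwd then false else true.

Section Activity.

Variables (V : finType) (G : mgraph V) (W : {set V}).
Implicit Types (a b c : ekind) (v : V) (s : seq (ekind * V)).

Definition open_triple a v b : bool :=
  if head_right a && head_left b then De G v :&: W != set0 else v \notin W.

Fixpoint interior_open s : bool :=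
  match s with
  | (a, v) :: ((b, _) :: _) as s' => open_triple a v b && interior_open s'
  | _ => true
  end.

Lemma interior_open_cons2 a v b w s :
  interior_open ((a, v) :: (b, w) :: s) = open_triple a v b && interior_open ((b, w) :: s).
Proof. by []. Qed.

Lemma open_tripleN a v b :
  ~~ open_triple a v b <->
  ((b = EFwd \/ a = EBwd) /\ v \in W) \/
  ((a = EFwd \/ a = EBi) /\ (b = EBwd \/ b = EBi) /\ De G v :&: W = set0).
Proof.
rewrite /open_triple; case: (eqVneq (De G v :&: W) set0) => [-> | /eqP De_W];
  by case: (v \in W); case: a; case: b => /=; intuition (try discriminate).
Qed.

Lemma interior_openP x s :
  interior_open s <->
  (forall k, k.+1 < size s ->
     open_triple (nth EBi (map fst s) k) (nth x (map snd s) k)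
                 (nth EBi (map fst s) k.+1)).
Proof.
elim: s => [|[a v] [|[b w] s] IH] //.
rewrite interior_open_cons2.
split=> [/andP [open_avb /IH open_s] [|k] // | open_k]; first exact: open_s.
by rewrite (open_k 0) //; apply/IH => k; apply: (open_k k.+1).
Qed.

Lemma active_interior_open x s :
  active G W x s <-> [/\ x \notin W, last x (map snd s) \notin W & interior_open s].
Proof.
rewrite /active /blocked /wverts /= size_map; split.
  move=> unblocked; split; [apply/negP=> x_W | apply/negP=> last_W |].
  - by apply: unblocked; left.
  - by apply: unblocked; right; left.
  apply/(interior_openP x) => k lt_k; apply/negPn/negP => /open_tripleN blocking.
  by apply: unblocked; right; right; exists k.+1.
case=> /negP x_W /negP last_W /(interior_openP x) open_s.
case=> [// | [// | [[|k] [_ lt_k /open_tripleN]]]] //.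
by rewrite open_s.
Qed.

Lemma interior_open_rcons a v t b z :
  interior_open ((a, v) :: rcons t (b, z)) =
  interior_open ((a, v) :: t) &&
  open_triple (last a (map fst t)) (last v (map snd t)) b.
Proof.
elim: t a v => [|[c u] t IH] a v; first by rewrite /= andbT.
by rewrite rcons_cons !interior_open_cons2 IH andbA.
Qed.

Lemma interior_open_catl p q : interior_open (p ++ q) -> interior_open p.
Proof.
elim: p => [|[a v] [|[b w] p] IH] //.
by rewrite !cat_cons !interior_open_cons2 => /andP [-> /IH].
Qed.

Lemma interior_open_catr p q : interior_open (p ++ q) -> interior_open q.
Proof.
elim: p => [|[a v] p IH] // open_pq; apply: IH; move: open_pq.
case: p => [|[b w] p]; last by rewrite !cat_cons interior_open_cons2 => /andP [].
by case: q => [|[b w] q] //; rewrite interior_open_cons2 => /andP [].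
Qed.

Lemma open_triple_mem a v b : v \in W -> open_triple a v b -> head_right a && head_left b.
Proof. by rewrite /open_triple => ->; case: (_ && _). Qed.

Lemma open_collider_descendant a v b :
  head_right a -> head_left b -> open_triple a v b -> exists2 w, w \in W & connect (dir G) v w.
Proof.
rewrite /open_triple => -> -> /set0Pn [w].
by rewrite !inE => /andP [v_w w_W]; exists w.
Qed.

Lemma collider_chain_descendant a v t b z :
  head_right a -> head_left b -> is_walk G v t ->
  interior_open ((a, v) :: rcons t (b, z)) ->
  exists2 w, w \in W & connect (dir G) (last v (map snd t)) w.
Proof.
move=> head_a; elim/last_ind: t b z => [|t [c u] IH] b z head_b.
  by move=> _ /= /andP [open_avb _]; apply: open_collider_descendant open_avb.
rewrite -cats1 is_walk_cat cats1 => /andP [walk_t /andP [edge_cu _]].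
rewrite interior_open_rcons !map_rcons !last_rcons => /andP [open_t open_cub].
case head_c: (head_right c); first exact: open_collider_descendant open_cub.
case: c head_c edge_cu open_t {open_cub} => //= _ u_parent open_t.
have [w w_W t_w] := IH EBwd u erefl walk_t open_t.
by exists w; last exact: connect_trans (connect1 u_parent) t_w.
Qed.

Lemma open_triple_shortcut e y t e' y' :
  is_walk G y t -> last y (map snd t) = y ->
  interior_open ((e, y) :: rcons t (e', y')) -> open_triple e y e'.
Proof.
move=> walk_t last_t open_seg.
have open_last : open_triple (last e (map fst t)) y e'.
  by move: open_seg; rewrite interior_open_rcons last_t => /andP [].
have [y_W | y_notW] := boolP (y \in W).
  have head_e : head_right e.
    by case: t {walk_t last_t open_last} open_seg => [|[d w] t]
       /andP [/(open_triple_mem y_W) /andP []].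
  have /andP [_ head_e'] := open_triple_mem y_W open_last.
  by rewrite /open_triple head_e head_e' /=; apply/set0Pn; exists y; rewrite !inE connect0.
rewrite /open_triple; case: ifP => [/andP [head_e head_e'] | _] //.
have [w w_W y_w] := collider_chain_descendant head_e head_e' walk_t open_seg.
by apply/set0Pn; exists w; rewrite !inE -{1}last_t y_w.
Qed.

Lemma interior_open_primary_aux fuel x s :
  size s <= fuel -> is_walk G x s -> interior_open s ->
  interior_open (primary_aux fuel x s).
Proof.
elim: fuel x s => [|fuel IH] x s //= size_s walk_s open_s.
case drop_s: (drop (last_idx x s) s) => [|[e y] rest] //.
have [def_s size_rest] := drop_last_idx_cons drop_s.
have walk_rest : is_walk G y rest.
  by move: walk_s; rewrite def_s is_walk_cat => /andP [_ /= /andP []].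
have open_rest : interior_open ((e, y) :: rest).
  by move: open_s; rewrite def_s => /interior_open_catr.
have {}size_rest : size rest <= fuel by rewrite -ltnS (leq_trans size_rest).
have IHrest := IH y rest size_rest walk_rest (@interior_open_catr [:: (e, y)] rest open_rest).
case: fuel {IH size_s size_rest} IHrest => [// | fuel] /=.
case drop_rest: (drop (last_idx y rest) rest) => [|[e' y'] rest'] //= ->.
have [def_rest _] := drop_last_idx_cons drop_rest.
set t := take _ rest in def_rest.
rewrite andbT; apply: (@open_triple_shortcut _ _ t _ y').
- by move: walk_rest; rewrite def_rest is_walk_cat => /andP [].
- exact: last_take_last_idx.
- by move: open_rest; rewrite def_rest -cat_rcons -cat_cons => /interior_open_catl.
Qed.

End Activity.

Theorem mainTheorem6 (V : finType) (G : mgraph V) (W : {set V})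
    (x : V) (s : seq (ekind * V)) :
  (is_ADMG G \/ is_CDMG G) ->
  is_walk G x s ->
  active G W x s ->
  active G W x (primary x s).
Proof.
move=> _ walk_s /active_interior_open [x_notW last_notW open_s].
apply/active_interior_open; split => //.
  by rewrite last_primary_aux.
exact: interior_open_primary_aux.
Qed.
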